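(* The symmetric precubical set of labels $\mathrm{sh}_{\square_S}\mathcal{L}_{\square_S}(!\Sigma)$ is isomorphic to the following symmetric precubical set $!^S\Sigma$: $(!^S\Sigma)_0=\{()\}$ (the empty word); $(!^S\Sigma)_n=\Sigma^n$ for $n\ge1$; $\partial_i^0(a_1,\dots,a_n)=\partial_i^1(a_1,\dots,a_n)=(a_1,\dots,\widehat{a_i},\dots,a_n)$ (the letter $a_i$ removed); and $s_i(a_1,\dots,a_n)=(a_1,\dots,a_{i-1},a_{i+1},a_i,a_{i+2},\dots,a_n)$ for $1\le i\le n-1$.
   Context: $[0]=\{()\}$, $[n]=\{0,1\}^n$ ($n\ge1$) with the product order; ${\rm PoSet}$: posets with strictly increasing maps. Face maps $\delta_i^\alpha:[n-1]\to[n]$ insert $\alpha$ at position $i$; $\square$ is the subcategory of ${\rm PoSet}$ with objects $[n]$, $n\ge0$, generated by face maps; its presheaves are precubical sets. Symmetry maps $\sigma_i:[n]\to[n]$ ($n\ge2$, $1\le i\le n-1$) swap coordinates $i$ and $i+1$. $\square_S$ is the subcategory of ${\rm PoSet}$ with objects $[n]$ generated by the face maps and the symmetry maps; its presheaves are symmetric precubical sets, with $\partial_i^\alpha=(\delta_i^\alpha)^*$ and $s_i=(\sigma_i)^*$. $\square_S[p]=\square_S(-,[p])$ and $\partial\square_S[p]$ is its subpresheaf of cubes of dimension $<p$. $\mathcal L_{\square_S}$ is the left adjoint of restriction from symmetric precubical sets to precubical sets. $\Sigma$ is a non-empty set; $!\Sigma$ is the precubical set with $(!\Sigma)_0=\{()\}$,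 $(!\Sigma)_n=\Sigma^n$, $\partial_i^0=\partial_i^1$ deleting the $i$-th letter. $\mathrm{sh}_{\square_S}$ is the left adjoint of the inclusion of the full subcategory of symmetric precubical sets orthogonal to the maps $\square_S[p]\sqcup_{\partial\square_S[p]}\square_S[p]\to\square_S[p]$, $p\ge2$. *)

From mathcomp Require Import all_boot.
From Stdlib Require Import ProofIrrelevance.
Set Implicit Arguments. Unset Strict Implicit. Unset Printing Implicit Defensive.

Definition cube n := n.-tuple bool.

(* Words / tuples; indices are 0-based (paper's index i is our i-1). *)
Definition tup (T : Type) n := n.-tuple T.

Definition del (T : Type) n (w : n.+1.-tuple T) (i : 'I_n.+1) : n.-tuple T :=
  [tuple tnth w (lift i j) | j < n].

Definition swapidx (i j : nat) : nat :=
  if j == i then i.+1 else if j == i.+1 then i else j.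

Definition swapw (T : Type) n (w : n.+2.-tuple T) (i : 'I_n.+1) : n.+2.-tuple T :=
  [tuple tnth w (inord (swapidx i j)) | j < n.+2].

Definition face n (i : 'I_n.+1) (a : bool) (x : cube n) : cube n.+1 :=
  [tuple (if (j < i)%N then nth false x j
          else if (j : nat) == i then a else nth false x j.-1) | j < n.+1].

Definition swapc n (i : 'I_n.+1) (x : cube n.+2) : cube n.+2 := swapw x i.

(* The maps of the subcategory of PoSet generated by the face maps
   (sym = false: the category box) or by the face and symmetry maps
   (sym = true: the category box_S). *)
Unset Implicit Arguments.
Inductive gen (sym : bool) (m : nat) : forall n, (cube m -> cube n) -> Prop :=
| gen_id : gen sym m m id
| gen_face n (i : 'I_n.+1) (a : bool) f :
    gen sym m n f -> gen sym m n.+1 (face i a \o f)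
| gen_sym n (i : 'I_n.+1) f :
    sym -> gen sym m n.+2 f -> gen sym m n.+2 (swapc i \o f).
Set Implicit Arguments.
Arguments gen_face {sym m n} i a {f}.
Arguments gen_sym {sym m n} i {f}.

Lemma gen_comp sym m n p (f : cube m -> cube n) (g : cube n -> cube p) :
  gen sym m n f -> gen sym n p g -> gen sym m p (g \o f).
Proof.
move=> Hf Hg; elim: Hg => [|q i a h _ IH|q i h Hs _ IH].
- exact: Hf.
- exact: (gen_face i a IH).
- exact: (gen_sym i Hs IH).
Qed.

Lemma gen_incl m n f : gen false m n f -> gen true m n f.
Proof.
elim=> [|q i a h _ IH|q i h Hs _ IH].
- exact: gen_id.
- exact: gen_face.
- by [].
Qed.

Definition hom (sym : bool) m n := {f : cube m -> cube n | gen sym m n f}.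

Definition hid sym n : hom sym n n := exist _ id (gen_id sym n).

Definition hcomp sym m n p (f : hom sym m n) (g : hom sym n p) : hom sym m p :=
  exist _ (proj1_sig g \o proj1_sig f) (gen_comp (proj2_sig f) (proj2_sig g)).

Definition hface sym n (i : 'I_n.+1) (a : bool) : hom sym n n.+1 :=
  exist _ (face i a \o id) (gen_face i a (gen_id sym n)).

Definition hsym n (i : 'I_n.+1) : hom true n.+2 n.+2 :=
  exist _ (swapc i \o id) (gen_sym i isT (gen_id true n.+2)).

Definition hincl m n (f : hom false m n) : hom true m n :=
  exist _ (proj1_sig f) (gen_incl (proj2_sig f)).

Lemma hom_eq sym m n (f g : hom sym m n) : proj1_sig f = proj1_sig g -> f = g.
Proof.
case: f => f Hf; case: g => g Hg /= E; subst g.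
by rewrite (proof_irrelevance _ Hf Hg).
Qed.

(* A presheaf on box (sym = false: precubical set) or on box_S
   (sym = true: symmetric precubical set), with carrier X. *)
Record psh_on (sym : bool) (X : nat -> Type) := PshOn {
  act : forall m n, hom sym m n -> X n -> X m;
  act_id : forall n (x : X n), act (hid sym n) x = x;
  act_comp : forall m n p (f : hom sym m n) (g : hom sym n p) (x : X p),
      act (hcomp f g) x = act f (act g x) }.
Arguments act {sym X} _ {m n} f x.

Definition is_morph sym X Y (PX : psh_on sym X) (PY : psh_on sym Y)
  (h : forall n, X n -> Y n) : Prop :=
  forall m n (f : hom sym m n) (x : X n), h m (act PX f x) = act PY f (h n x).

Definition res X (P : psh_on true X) : psh_on false X.
Proof.
refine (@PshOn false X (fun m n f x => act P (hincl f) x) _ _).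
- move=> n x /=.
  have -> : hincl (hid false n) = hid true n by apply: hom_eq.
  exact: act_id.
- move=> m n p f g x /=.
  have -> : hincl (hcomp f g) = hcomp (hincl f) (hincl g) by apply: hom_eq.
  exact: act_comp.
Defined.

Definition yon p : psh_on true (fun n => hom true n p).
Proof.
refine (@PshOn true (fun n => hom true n p) (fun m n f g => hcomp f g) _ _).
- by move=> n x; apply: hom_eq.
- by move=> m n q f g x; apply: hom_eq.
Defined.

(* Y is orthogonal to the codiagonal
     box_S[p] \sqcup_{\partial box_S[p]} box_S[p] -> box_S[p].
   A map out of the pushout is a pair (u,v) of maps box_S[p] -> Y agreeing
   on the subpresheaf \partial box_S[p] of cubes of dimension < p; its
   composite with the codiagonal from w : box_S[p] -> Y is the pair (w,w). *)
Definition orth_codiag Y (PY : psh_on true Y) (p : nat) : Prop :=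
  forall u v : (forall n, hom true n p -> Y n),
    is_morph (yon p) PY u -> is_morph (yon p) PY v ->
    (forall n (f : hom true n p), (n < p)%N -> u n f = v n f) ->
    exists! w : (forall n, hom true n p -> Y n),
      is_morph (yon p) PY w /\ w = u /\ w = v.

(* objects of the full subcategory used to define sh_{box_S} *)
Definition is_sheaf Y (PY : psh_on true Y) : Prop :=
  forall p, (2 <= p)%N -> orth_codiag PY p.

(* (S, eta) is a universal arrow from the precubical set K to the
   composite right adjoint (restriction o inclusion); i.e. S together with
   eta is (a model of) sh_{box_S} L_{box_S} K, which is determined up to
   unique isomorphism by this property. *)
Definition reflects X S (PK : psh_on false X) (PS : psh_on true S)
  (eta : forall n, X n -> S n) : Prop :=
  [/\ is_morph PK (res PS) eta,
      is_sheaf PS &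
      forall Y (PY : psh_on true Y), is_sheaf PY ->
        forall g : (forall n, X n -> Y n), is_morph PK (res PY) g ->
        exists! h : (forall n, S n -> Y n),
          is_morph PS PY h /\ (forall n x, h n (eta n x) = g n x)].

Definition bang_faces (T : Type) sym (P : psh_on sym (tup T)) : Prop :=
  forall n (i : 'I_n.+1) (a : bool) (w : tup T n.+1),
    act P (@hface sym n i a) w = del w i.

Definition bang_syms (T : Type) (P : psh_on true (tup T)) : Prop :=
  forall n (i : 'I_n.+1) (w : tup T n.+2), act P (@hsym n i) w = swapw w i.

(* Every map of box_S copies each input coordinate to exactly one output
   coordinate and fixes the remaining ones, so it acts on words by reading
   letters along this injection; this action is !^S Sigma, whose faces delete
   letters.  A word of length >= 2 is determined by its faces, so !^S Sigma is
   orthogonal to the codiagonals, and its restriction to box is !Sigma with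
   the identity as unit.  Conversely, a map g from !Sigma into an orthogonal
   Y commutes with every s_i, by induction on dimension: a face of a symmetry
   is a lower-dimensional symmetry (or identity) followed by a face, so s_i
   (g x) and g (s_i x) have the same faces, and in Y cubes of dimension >= 2
   are determined by their faces. *)

From mathcomp Require Import all_boot zify.
From Stdlib Require Import FunctionalExtensionality.
Set Implicit Arguments. Unset Strict Implicit. Unset Printing Implicit Defensive.

Lemma swapidxK i : involutive (swapidx i).
Proof. move=> j; rewrite /swapidx; repeat case: ifP => /eqP; lia. Qed.

Lemma swapidx_lt n i j : i < n.+1 -> j < n.+2 -> swapidx i j < n.+2.
Proof. rewrite /swapidx; repeat case: ifP => /eqP; lia. Qed.

Lemma nth_face n (i : 'I_n.+1) a (x : cube n) l :
  nth false (face i a x) l =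
  if l < i then nth false x l else if l == i then a else nth false x l.-1.
Proof.
have [Hl|Hl] := ltnP l n.+1; first by rewrite -[l]/(val (Ordinal Hl)) -tnth_nth tnth_mktuple.
have Hi := ltn_ord i.
rewrite nth_default ?size_tuple // ifF; last lia.
by rewrite ifF ?nth_default ?size_tuple //; lia.
Qed.

Lemma nth_swapc n (i : 'I_n.+1) (y : cube n.+2) l :
  nth false (swapc i y) l = nth false y (swapidx i l).
Proof.
have Hi := ltn_ord i.
have [Hl|Hl] := ltnP l n.+2.
  rewrite -[l]/(val (Ordinal Hl)) -tnth_nth tnth_mktuple (tnth_nth false) /=.
  by rewrite inordK // swapidx_lt.
rewrite !nth_default ?size_tuple //.
by move: Hl; rewrite /swapidx; repeat case: ifP => /eqP; lia.
Qed.

Definition copies m n (f : cube m -> cube n) j k :=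
  forall x, nth false (f x) j = nth false x k.

Lemma copies_id m j k : k < m -> copies (@id (cube m)) j k -> j = k.
Proof.
move=> Hk /(_ [tuple (val l == k) | l < m]).
rewrite -[X in _ = nth _ _ X]/(val (Ordinal Hk)) -tnth_nth tnth_mktuple eqxx.
have [Hj|Hj] := ltnP j m; last by rewrite nth_default ?size_tuple.
by rewrite -[j]/(val (Ordinal Hj)) -tnth_nth tnth_mktuple => /eqP.
Qed.

Lemma copies_face m n (i : 'I_n.+1) a (f : cube m -> cube n) j k : k < m ->
  copies (face i a \o f) j k -> j != i /\ copies f (unbump i j) k.
Proof.
move=> Hk C; have Hji : j != i.
  apply/eqP=> Eji; have := C (nseq_tuple m (~~ a)); clear C.
  by rewrite /= nth_face Eji ltnn eqxx nth_nseq Hk; case: a.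
split=> // x; rewrite -C /= nth_face /unbump.
have [lt|gt|eq] := ltngtP j i; last by rewrite eq eqxx in Hji.
- by rewrite subn0.
- by rewrite subn1.
Qed.

Lemma copies_swapc m n (i : 'I_n.+1) (f : cube m -> cube n.+2) j k :
  copies (swapc i \o f) j k <-> copies f (swapidx i j) k.
Proof.
by split=> C x; rewrite -C /= nth_swapc.
Qed.

Lemma gen_copies_exists sym m n f : gen sym m n f ->
  forall k, k < m -> exists2 j, j < n & copies f j k.
Proof.
elim=> [|{}n i a {}f _ IH|{}n i {}f _ _ IH] k Hk.
- by exists k.
- have [j Hj C] := IH k Hk; exists (bump i j); first by rewrite /bump; case: leqP; lia.
  move=> x; rewrite /= nth_face -C /bump.
  have [Hij|Hij] := leqP i j; last by rewrite Hij.
  by rewrite add1n !ifF //; lia.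
- have [j Hj C] := IH k Hk; exists (swapidx i j); first exact: swapidx_lt.
  by apply/copies_swapc; rewrite swapidxK.
Qed.

Lemma gen_copies_uniq sym m n f : gen sym m n f ->
  forall j j' k, k < m -> copies f j k -> copies f j' k -> j = j'.
Proof.
elim=> [|{}n i a {}f _ IH|{}n i {}f _ _ IH] j j' k Hk C C'.
- by rewrite (copies_id Hk C) (copies_id Hk C').
- have [/negPf Hj {}C] := copies_face Hk C; have [/negPf Hj' {}C'] := copies_face Hk C'.
  have := congr1 (bump i) (IH _ _ _ Hk C C').
  by rewrite !unbumpKcond Hj Hj'.
- move/copies_swapc: C; move/copies_swapc: C' => C' C.
  by rewrite -(swapidxK i j) -(swapidxK i j') (IH _ _ _ Hk C C').
Qed.

(* [s0] is a junk default: for a generated [f] every coordinate is copied, so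
   the [None] branch is never taken. *)
Definition bact (T : Type) (s0 : T) m n (f : cube m -> cube n) (w : tup T n) : tup T m :=
  [tuple (if [pick j : 'I_n | [forall x, nth false (f x) j == nth false x k]] is Some j
          then tnth w j else s0) | k < m].

Lemma tnth_bact T (s0 : T) sym m n f (w : tup T n) (k : 'I_m) (j : 'I_n) :
  gen sym m n f -> copies f j k -> tnth (bact s0 f w) k = tnth w j.
Proof.
move=> Gf C; rewrite tnth_mktuple.
case: pickP => [j' /forallP C'|/(_ j) /forallP []]; last by move=> x; apply/eqP.
congr tnth; apply: val_inj; apply: (gen_copies_uniq Gf (ltn_ord k)) C => x.
exact/eqP.
Qed.
Arguments tnth_bact {T} s0 {sym m n f} w {k} j.

Definition bangS (T : Type) (s0 : T) : psh_on true (tup T).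
Proof.
refine (@PshOn true (tup T) (fun m n f w => bact s0 (proj1_sig f) w) _ _).
- move=> n x; apply: eq_from_tnth => k.
  by rewrite (tnth_bact s0 x k (gen_id true n)).
- move=> m n p [f Gf] [g Gg] x /=; apply: eq_from_tnth => k.
  have [j Hj Cf] := gen_copies_exists Gf (ltn_ord k).
  have [l Hl Cg] := gen_copies_exists Gg Hj.
  rewrite (tnth_bact s0 _ (Ordinal Hj) Gf Cf) (tnth_bact s0 _ (k := Ordinal Hj) (Ordinal Hl) Gg Cg).
  by rewrite (tnth_bact s0 x (Ordinal Hl) (gen_comp Gf Gg)) // => y /=; rewrite Cg Cf.
Defined.

Lemma bangS_faces T (s0 : T) : bang_faces (bangS s0).
Proof.
move=> n i a w /=; apply: eq_from_tnth => k.
rewrite (tnth_bact s0 w (lift i k) (proj2_sig (hface true i a))) ?tnth_mktuple //.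
move=> x /=; rewrite nth_face /= /bump.
have [Hik|Hik] := leqP i k; last by rewrite add0n Hik.
by rewrite add1n !ifF //; lia.
Qed.

Lemma bangS_syms T (s0 : T) : bang_syms (bangS s0).
Proof.
move=> n i w /=; apply: eq_from_tnth => k.
have Hs : swapidx i k < n.+2 by apply: swapidx_lt.
rewrite (tnth_bact s0 w (Ordinal Hs) (proj2_sig (hsym i))) ?tnth_mktuple.
  by congr tnth; apply: val_inj; rewrite /= inordK.
by move=> x /=; rewrite nth_swapc swapidxK.
Qed.

Lemma del_inj T n (x y : tup T n.+2) : (forall i, del x i = del y i) -> x = y.
Proof.
move=> Exy; apply: eq_from_tnth => k.
have [i Hik] : exists i : 'I_n.+2, i != k.
  exists (if (k : nat) == 0 then ord_max else ord0); apply/eqP.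
  by case: eqP => Hk /(congr1 val) /=; lia.
case: (unliftP i k) Hik => [l ->|->]; last by rewrite eqxx.
by move=> _; have := congr1 (fun t => tnth t l) (Exy i); rewrite !tnth_mktuple.
Qed.

Lemma hom_ind sym (Q : forall m n, hom sym m n -> Prop) :
  (forall n, Q n n (hid sym n)) ->
  (forall m n p (f : hom sym m n) (g : hom sym n p), Q m n f -> Q n p g -> Q m p (hcomp f g)) ->
  (forall n (i : 'I_n.+1) a, Q n n.+1 (hface sym i a)) ->
  (forall (hs : sym) n (i : 'I_n.+1),
      Q n.+2 n.+2 (exist _ (swapc i \o id) (gen_sym i hs (gen_id sym n.+2)))) ->
  forall m n f, Q m n f.
Proof.
move=> Qid Qcomp Qface Qsym m n [f Gf].
elim: Gf (Gf) => [|p i a g Gg IH|p i g hs Gg IH] G.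
- by have -> : exist _ _ G = hid sym m by apply: hom_eq.
- have -> : exist _ _ G = hcomp (exist _ g Gg) (hface sym i a) by apply: hom_eq.
  exact: Qcomp.
- have -> : exist _ _ G =
            hcomp (exist _ g Gg) (exist _ _ (gen_sym i hs (gen_id sym p.+2))) by apply: hom_eq.
  exact: Qcomp.
Qed.

Lemma is_morph_faces X Y (PX : psh_on false X) (PY : psh_on false Y) h :
  (forall n (i : 'I_n.+1) a x, h n (act PX (hface false i a) x) = act PY (hface false i a) (h n.+1 x)) ->
  is_morph PX PY h.
Proof.
move=> h_face; apply: hom_ind => //.
- by move=> n x; rewrite !act_id.
- by move=> m n p f g Hf Hg x; rewrite !act_comp Hf Hg.
Qed.

Lemma is_morph_faces_syms X Y (PX : psh_on true X) (PY : psh_on true Y) h :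
  (forall n (i : 'I_n.+1) a x, h n (act PX (hface true i a) x) = act PY (hface true i a) (h n.+1 x)) ->
  (forall n (i : 'I_n.+1) x, h n.+2 (act PX (hsym i) x) = act PY (hsym i) (h n.+2 x)) ->
  is_morph PX PY h.
Proof.
move=> h_face h_sym; apply: hom_ind => //.
- by move=> n x; rewrite !act_id.
- by move=> m n p f g Hf Hg x; rewrite !act_comp Hf Hg.
- move=> hs n i; have -> : exist _ _ (gen_sym i hs (gen_id true n.+2)) = hsym i by apply: hom_eq.
  exact: h_sym.
Qed.

Lemma hincl_hface n (i : 'I_n.+1) a : hincl (hface false i a) = hface true i a.
Proof. exact: hom_eq. Qed.

Lemma res_faces T (P : psh_on true (tup T)) : bang_faces P -> bang_faces (res P).
Proof. by move=> HP n i a w; rewrite /= hincl_hface. Qed.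

Lemma hom_eq_nth sym m n (f g : hom sym m n) :
  (forall x l, nth false (proj1_sig f x) l = nth false (proj1_sig g x) l) -> f = g.
Proof.
move=> Efg; apply: hom_eq; apply: functional_extensionality => x.
apply: val_inj; apply: (eq_from_nth (x0 := false)) => [|l _]; last exact: Efg.
by rewrite !size_tuple.
Qed.

(* Innermost conditionals first, so that each case hypothesis is a plain
   comparison of naturals. *)
Ltac case_ifs := repeat match goal with
  | |- context [if ?c then _ else _] =>
    lazymatch c with
    | context [if _ then _ else _] => fail
    | true => fail
    | false => fail
    | _ => let E := fresh "E" in case E: c; cbv beta iota
    end
  end.

Ltac nth_index_arith := first [ done | congr (nth _ _ _); lia | exfalso; lia ].

Inductive sym_or_id : forall n, hom true n n -> Prop :=
| sym_or_id_id n : sym_or_id (hid true n)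
| sym_or_id_sym n (i : 'I_n.+1) : sym_or_id (hsym i).

Lemma hface_hsym n (i : 'I_n.+1) (j : 'I_n.+2) a :
  exists (j' : 'I_n.+2) (s : hom true n.+1 n.+1),
    sym_or_id s /\ hcomp (hface true j a) (hsym i) = hcomp s (hface true j' a).
Proof.
have Hi := ltn_ord i; have Hj := ltn_ord j.
have [ji|ij] := ltnP j i.
  case: n i j Hi Hj ji => [|n] i j Hi Hj ji; first lia.
  exists j, (hsym (inord i.-1)); split; first exact: sym_or_id_sym.
  apply: hom_eq_nth => x l; cbn -[face swapc]; rewrite nth_swapc !nth_face !nth_swapc inordK; last lia.
  by rewrite /swapidx; case_ifs; nth_index_arith.
have [ij1|ji1] := ltnP i.+1 j.
  case: n i j Hi Hj ij ij1 => [|n] i j Hi Hj ij ij1; first lia.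
  exists j, (hsym (inord i)); split; first exact: sym_or_id_sym.
  apply: hom_eq_nth => x l; cbn -[face swapc]; rewrite nth_swapc !nth_face !nth_swapc inordK; last lia.
  by rewrite /swapidx; case_ifs; nth_index_arith.
exists (inord (if j == i :> nat then i.+1 else i)), (hid true n.+1); split; first exact: sym_or_id_id.
apply: hom_eq_nth => x l; cbn -[face swapc]; rewrite nth_swapc !nth_face inordK; last by case: ifP; lia.
by rewrite /swapidx; case_ifs; nth_index_arith.
Qed.

Lemma gen_factor_face m p f : gen true m p f ->
  match p return (cube m -> cube p) -> Prop with
  | 0 => fun _ => True
  | n.+1 => fun f => m < n.+1 ->
      exists (j : 'I_n.+1) a f', gen true m n f' /\ f =1 face j a \o f'
  end f.
Proof.
elim=> [|n i a f0 G0 _|n i f0 _ _ IH].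
- by case: m f => //= m _; rewrite ltnn.
- by move=> _; exists i, a, f0.
- move=> /IH [j [a [f1 [G1 E1]]]].
  have [j' [s [_ E]]] := hface_hsym i j a.
  exists j', a, (proj1_sig s \o f1); split; first exact: gen_comp G1 (proj2_sig s).
  by move=> x; rewrite /= E1; apply: (congr1 (fun F => proj1_sig F (f1 x)) E).
Qed.

Lemma hom_factor_hface k n (f : hom true k n.+1) : k < n.+1 ->
  exists (j : 'I_n.+1) a (f' : hom true k n), f = hcomp f' (hface true j a).
Proof.
case: f => f Gf /(gen_factor_face Gf) [j [a [f' [Gf' E]]]].
exists j, a, (exist _ f' Gf'); apply: hom_eq.
exact: functional_extensionality.
Qed.

Lemma yon_morph_act Y (PY : psh_on true Y) p u : is_morph (yon p) PY u ->
  forall n (f : hom true n p), u n f = act PY f (u p (hid true p)).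
Proof. by move=> Hu n f; rewrite -Hu; congr (u n _); apply: hom_eq. Qed.

Lemma act_morph_yon Y (PY : psh_on true Y) p (y : Y p) :
  is_morph (yon p) PY (fun n f => act PY f y).
Proof. by move=> m n f g; rewrite /= act_comp. Qed.

Lemma sheafP Y (PY : psh_on true Y) : is_sheaf PY <->
  (forall n (y1 y2 : Y n.+2),
     (forall (i : 'I_n.+2) a, act PY (hface true i a) y1 = act PY (hface true i a) y2) ->
     y1 = y2).
Proof.
split=> [HY n y1 y2 Ey | Hfaces [|[|p]] // _ u v Hu Hv Euv].
  have agree k (f : hom true k n.+2) : k < n.+2 -> act PY f y1 = act PY f y2.
    by move=> /(hom_factor_hface f) [j [a [f' ->]]]; rewrite !act_comp Ey.
  have [w [[_ [e1 e2]] _]] := HY n.+2 isT (fun k f => act PY f y1) (fun k f => act PY f y2)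
    (act_morph_yon PY y1) (act_morph_yon PY y2) agree.
  have := congr1 (fun F => F n.+2 (hid true n.+2)) (etrans (esym e1) e2).
  by rewrite /= !act_id.
have Eid : u p.+2 (hid true p.+2) = v p.+2 (hid true p.+2).
  by apply: Hfaces => i a; rewrite -(yon_morph_act Hu) -(yon_morph_act Hv) Euv.
have -> : u = v.
  apply: functional_extensionality_dep => n; apply: functional_extensionality => f.
  by rewrite (yon_morph_act Hu) (yon_morph_act Hv) Eid.
by exists v; split=> [|w [_ [-> _]]].
Qed.

Lemma bangS_sheaf T (s0 : T) : is_sheaf (bangS s0).
Proof.
apply/sheafP => n y1 y2 Ey; apply: del_inj => i.
by rewrite -(bangS_faces s0 i false y1) -(bangS_faces s0 i false y2) Ey.
Qed.

Lemma bangS_universal T (s0 : T) (PK : psh_on false (tup T)) Y (PY : psh_on true Y)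
    (g : forall n, tup T n -> Y n) :
  bang_faces PK -> is_sheaf PY -> is_morph PK (res PY) g -> is_morph (bangS s0) PY g.
Proof.
move=> HK /sheafP HY Hg.
have g_face n (i : 'I_n.+1) a x :
    g n (act (bangS s0) (hface true i a) x) = act PY (hface true i a) (g n.+1 x).
  by rewrite bangS_faces -(HK n i a x) Hg /= hincl_hface.
apply: is_morph_faces_syms => //.
elim/ltn_ind=> n IHn i x; apply: HY => j a.
have g_s k (s : hom true k k) : sym_or_id s -> k <= n.+1 ->
    forall z, g k (act (bangS s0) s z) = act PY s (g k z).
  by case: k s / => [k|q i'] Hk z; [rewrite !act_id | apply: IHn].
have [j' [s [Hs E]]] := hface_hsym i j a.
by rewrite -g_face -act_comp E act_comp (g_s _ _ Hs) // g_face -act_comp -E act_comp.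
Qed.

Theorem proposition11p3 (Sigma : Type) (hne : inhabited Sigma) :
  (exists PK : psh_on false (tup Sigma), bang_faces PK) /\
  forall PK : psh_on false (tup Sigma), bang_faces PK ->
    exists PS : psh_on true (tup Sigma),
      bang_faces PS /\ bang_syms PS /\
      exists eta : (forall n, tup Sigma n -> tup Sigma n), reflects PK PS eta.
Proof.
case: hne => s0; split; first by exists (res (bangS s0)); apply/res_faces/bangS_faces.
move=> PK HK; exists (bangS s0); split; first exact: bangS_faces.
split; first exact: bangS_syms.
exists (fun n w => w); split.
- by apply: is_morph_faces => n i a x; rewrite HK res_faces //; apply: bangS_faces.
- exact: bangS_sheaf.
- move=> Y PY HY g Hg; exists g; split=> [|h [_ Eh]].
    by split=> //; exact: bangS_universal HK HY Hg.
  by apply: functional_extensionality_dep => n; apply: functional_extensionality.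
Qed.
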